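(* Let $\mathcal{Q}$ be a recourse function with a disaggregation $\{\mathcal{Q}(R,v)\}$ such that there are vectors $w\in\mathbb{Q}^{V_+}_{\ge0}$ and $b\in\mathbb{Z}^{V_+}_{\ge0}$ with the property that for every route $R$ there exists $\bar y_R\in\Pi(R)\cap[\mathbf 0,b]^N$ satisfying $\mathcal{Q}(R,v)\ge\sum_{\xi\in[N]}p_\xi w_v(\bar y_R)^\xi_v$ for all $v\in V_+(R)$. Define $$\mathcal{F}(\mathcal{X},\mathcal{Q})=\Big\{(x,\theta)\in(\mathcal{X}\cap\mathbb{Z}^E)\times\mathbb{R}^{V_+}_{\ge0}:\ \theta_v\ge\sum_{R\in\mathcal{R}(x)}\mathcal{Q}(R,v)\ \forall v\in V_+\Big\}$$ and let $\mathcal{M}$ be the set of triples $(x,\theta,y)$ with $x\in\mathcal{X}\cap\mathbb{Z}^E$, $y\in\Pi(x)\cap[\mathbf 0,b]^N$ and $\theta_v\ge\sum_{\xi\in[N]}p_\xi w_v y^\xi_v$ for all $v\in V_+$. Then $\mathcal{F}(\mathcal{X},\mathcal{Q})\subseteq\{(x,\theta):\exists y \text{ with }(x,\theta,y)\in\mathcal{M}\}$.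
   Context: $G=(V,E)$ is a complete undirected graph with $V=\{0\}\cup V_+$ ($0$ the depot, $V_+$ the customers); $D=(V,A)$ replaces each edge by two opposite arcs. $C\in\mathbb{Q}_{>0}$ is the capacity. Scenarios $\xi\in[N]$ have demand vectors $d^\xi\in\mathbb{Q}^{V_+}_{\ge0}$ and probabilities $p_\xi\ge0$, $\sum_\xi p_\xi=1$; assume $d^\xi(v)\le C$ for all $\xi,v$. $f(S)=\sum_{i\in S}f(i)$; $\bar d=\sum_\xi p_\xi d^\xi$. $\delta(S)$: edges with exactly one endpoint in $S$; $E(S)$: edges with both endpoints in $S$. $\mathcal{X}$ is one of $\mathcal{X}_{\mathrm{sub}}=\{x\in[0,2]^E: x(\delta(v))=2\ \forall v\in V_+,\ x(E(S))\le|S|-1\ \forall\emptyset\ne S\subseteq V_+\}$ or $\mathcal{X}_{\mathrm{cvrp}}=\mathcal{X}_{\mathrm{sub}}\cap\{x: x(\delta(0))=2k,\ x(E(S))\le |S|-\lceil\bar d(S)/C\rceil\ \forall\emptyset\ne S\subseteq V_+\}$ for a given positive integer $k$. A route $R=(v_1,\dots,v_\ell)$ is the cycle $0,v_1,\dots,v_\ell,0$ through distinct customers, $V_+(R)=\{v_1,\dots,v_\ell\}$, $v_0=v_{\ell+1}=0$. Each $x\in\mathcal{X}\cap\mathbb{Z}^E$ encodes a collection of routes $\mathcal{R}(x)$ whose customer sets partition $V_+$. A recourse function $\mathcal{Q}$ maps each route to a nonnegative rational; a disaggregation consists of values $\mathcal{Q}(R,v)$, $v\in V_+$, with $\mathcal{Q}(R)=\sum_{v\in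 V_+(R)}\mathcal{Q}(R,v)$ and $\mathcal{Q}(R,v)=0$ for $v\notin V_+(R)$. Vectors $y\in\mathbb{R}^{[N]\times V_+}$ have entries $y^\xi_v$. For a route $R=(v_1,\dots,v_\ell)$ and $\xi$, $\mathcal{Y}^\xi(R)$ is the set of $y^\xi\in\mathbb{Z}^{V_+}_{\ge0}$ for which there exist $f\in\mathbb{R}^A_{\ge0}$, $g\in\mathbb{R}^{V_+}_{\ge0}$ with $f_{(v_{i-1},v_i)}+d^\xi(v_i)=f_{(v_i,v_{i+1})}+g_{v_i}$ ($i\in[\ell]$), $f_{(v_{i-1},v_i)}\le C$ ($i\in[\ell+1]$), $g_{v_i}\le Cy^\xi_{v_i}$ ($i\in[\ell]$). $\Pi(R)=\mathcal{Y}^1(R)\times\cdots\times\mathcal{Y}^N(R)$; $\Pi(x)=\bigcap_{R\in\mathcal{R}(x)}\Pi(R)$. $[\mathbf 0,b]^N=\{y:0\le y^\xi_v\le b_v\ \forall\xi,v\}$. *)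

From HB Require Import structures.
From mathcomp Require Import all_boot all_order all_algebra.
Set Implicit Arguments. Unset Strict Implicit. Unset Printing Implicit Defensive.
Import Order.TTheory GRing.Theory Num.Theory.
Local Open Scope ring_scope.

(* Vertices: [option V]; [None] is the depot 0, [Some v] the customer v \in V_+. *)
Definition vert (V : finType) := option V.

Definition edge (V : finType) := {e : {set option V} | #|e| == 2}.

Definition in_delta (V : finType) (S : {set option V}) (e : edge V) : bool :=
  #|val e :&: S| == 1.
Definition in_ES (V : finType) (S : {set option V}) (e : edge V) : bool :=
  val e \subset S.

Definition custs (V : finType) (S : {set V}) : {set option V} := Some @: S.

Definition in_Xsub (R : archiRealFieldType) (V : finType) (x : edge V -> R) : Prop :=
  [/\ forall e, 0 <= x e <= 2,
      forall v : V, \sum_(e | in_delta [set Some v] e) x e = 2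
    & forall S : {set V}, S != set0 ->
        \sum_(e | in_ES (custs S) e) x e <= (#|S|%:R - 1)].

Definition dbar (R : archiRealFieldType) (V : finType) (N : nat)
  (p : 'I_N -> R) (d : 'I_N -> V -> R) (S : {set V}) : R :=
  \sum_(v in S) \sum_(xi < N) p xi * d xi v.

Definition in_Xcvrp (R : archiRealFieldType) (V : finType) (N : nat)
  (C : R) (p : 'I_N -> R) (d : 'I_N -> V -> R) (k : nat) (x : edge V -> R) : Prop :=
  [/\ in_Xsub x,
      \sum_(e | in_delta [set None] e) x e = (2 * k)%:R
    & forall S : {set V}, S != set0 ->
        \sum_(e | in_ES (custs S) e) x e
          <= #|S|%:R - (Num.ceil (dbar p d S / C))%:~R].

Definition in_X (R : archiRealFieldType) (V : finType) (N : nat)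
  (C : R) (p : 'I_N -> R) (d : 'I_N -> V -> R) (kind : option nat)
  (x : edge V -> R) : Prop :=
  match kind with
  | None => in_Xsub x
  | Some k => in_Xcvrp C p d k x
  end.

(* A route R = (v_1,...,v_l): a nonempty duplicate-free sequence of customers,
   standing for the cycle 0, v_1, ..., v_l, 0. *)
Definition is_route (V : finType) (r : seq V) : Prop := r != [::] /\ uniq r.

Definition walk (V : finType) (r : seq V) : seq (option V) :=
  None :: rcons (map Some r) None.

(* number of times the cycle of route r traverses edge e (2 for {0,v_1} if l = 1) *)
Definition route_x (V : finType) (r : seq V) (e : edge V) : nat :=
  count (fun uv : option V * option V => [set uv.1; uv.2] == val e)
        (zip (walk r) (behead (walk r))).

(* x (integral) encodes the collection of routes rs = R(x): x is the sum of the
   edge-incidence vectors of the route cycles, and the customer sets of the routes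
   partition V_+. *)
Definition encodes (R : archiRealFieldType) (V : finType) (x : edge V -> R)
  (rs : seq (seq V)) : Prop :=
  [/\ forall r, r \in rs -> is_route r,
      forall v : V, count (fun r => v \in r) rs = 1%N
    & forall e, x e = (\sum_(r <- rs) route_x r e)%:R].

Definition in_Y (R : archiRealFieldType) (V : finType) (C : R) (dxi : V -> R)
  (r : seq V) (yxi : V -> R) : Prop :=
  (forall v, yxi v \is a Num.nat) /\
  exists (f : option V -> option V -> R) (g : V -> R),
    [/\ forall a b, 0 <= f a b,
        forall v, 0 <= g v,
        (* flow conservation and g <= C y at v_i, i in [l] *)
        forall i, (i < size r)%N -> forall u,
          nth None (walk r) i.+1 = Some u ->
          f (nth None (walk r) i) (Some u) + dxi u
            = f (Some u) (nth None (walk r) i.+2) + g u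
          /\ g u <= C * yxi u
      & (* capacity on arcs (v_{i-1}, v_i), i in [l+1] *)
        forall i, (i <= size r)%N ->
          f (nth None (walk r) i) (nth None (walk r) i.+1) <= C].

Definition in_PiR (R : archiRealFieldType) (V : finType) (N : nat) (C : R)
  (d : 'I_N -> V -> R) (r : seq V) (y : 'I_N -> V -> R) : Prop :=
  forall xi : 'I_N, in_Y C (d xi) r (y xi).

Definition in_Pi (R : archiRealFieldType) (V : finType) (N : nat) (C : R)
  (d : 'I_N -> V -> R) (rs : seq (seq V)) (y : 'I_N -> V -> R) : Prop :=
  forall r, r \in rs -> in_PiR C d r y.

Definition in_box (R : archiRealFieldType) (V : finType) (N : nat) (b : V -> nat)
  (y : 'I_N -> V -> R) : Prop :=
  forall xi v, 0 <= y xi v <= (b v)%:R.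

(* Every customer lies on exactly one route of R(x), and membership in Pi(R)
   only constrains y at the customers of R. So choosing one witness ybar_R per
   route of R(x) and reading y off, at each customer, from the witness of its
   route gives y in Pi(x) (and in the box); the bound on theta holds because
   sum_{R in R(x)} Q(R,v) reduces to the single term of the route through v.
   Nothing about X, p, d or C is needed beyond the fact that R(x) partitions
   the customers. *)
From HB Require Import structures.
From mathcomp Require Import all_boot all_order all_algebra.
Import Order.TTheory GRing.Theory Num.Theory.
Local Open Scope ring_scope.

Lemma seq_choice {T : eqType} {U : Type} (u0 : U) {P : T -> U -> Prop}
    {s : seq T} :
  {in s, forall x, exists u, P x u} ->
  exists f : T -> U, {in s, forall x, P x (f x)}.
Proof.
elim: s => [_|x s IHs Hs]; first by exists (fun=> u0).
have [ux Pux] := Hs x (mem_head x s).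
have [f Pf] := IHs (fun y ys => Hs y (mem_behead (s := x :: s) ys)).
exists (fun y => if y == x then ux else f y) => y; rewrite inE.
by have [-> | _ /= ys] := eqVneq y x; last exact: Pf.
Qed.

Definition route_of {T : eqType} (rs : seq (seq T)) (v : T) : seq T :=
  head [::] [seq r <- rs | v \in r].

Section RoutePartition.

Context {T : eqType} {rs : seq (seq T)}.
Hypothesis rs_partition : forall v, count (fun r => v \in r) rs = 1%N.

Lemma filter_route_of v : [seq r <- rs | v \in r] = [:: route_of rs v].
Proof.
have := rs_partition v; rewrite -size_filter /route_of.
by case: [seq r <- rs | v \in r] => [|r0 [|]].
Qed.

Lemma route_of_in v : route_of rs v \in rs.
Proof.
have := mem_head (route_of rs v) [::].
by rewrite -filter_route_of mem_filter => /andP[].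
Qed.

Lemma mem_route_of v : v \in route_of rs v.
Proof.
have := mem_head (route_of rs v) [::].
by rewrite -filter_route_of mem_filter => /andP[].
Qed.

Lemma route_ofE {r v} : r \in rs -> v \in r -> route_of rs v = r.
Proof.
move=> rs_r r_v; have : r \in [seq r <- rs | v \in r] by rewrite mem_filter r_v.
by rewrite filter_route_of inE => /eqP.
Qed.

Lemma big_route_of v (M : nmodType) (F : seq T -> M) :
  {in rs, forall r, v \notin r -> F r = 0} ->
  \sum_(r <- rs) F r = F (route_of rs v).
Proof.
move=> F0; rewrite (bigID (fun r => v \in r)) /= [X in _ + X]big1_seq ?addr0.
  by rewrite -big_filter filter_route_of big_seq1.
by move=> r /andP[r_v rs_r]; exact: F0.
Qed.

End RoutePartition.

Lemma mem_walk (V : finType) (r : seq V) (u : V) :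
  (Some u \in walk r) = (u \in r).
Proof. by rewrite /walk inE mem_rcons inE mem_map //; exact: Some_inj. Qed.

Lemma nth_walk_Some (V : finType) (r : seq V) i u :
  nth None (walk r) i = Some u -> u \in r.
Proof.
move=> walk_i; rewrite -mem_walk -walk_i.
case: (ltnP i (size (walk r))) => [|ge]; first exact: mem_nth.
by rewrite nth_default in walk_i.
Qed.

Lemma in_Y_eq_on (R : archiRealFieldType) (V : finType) (C : R) (dxi : V -> R)
    (r : seq V) (y y' : V -> R) :
  (forall v, y' v \is a Num.nat) -> {in r, y =1 y'} ->
  in_Y C dxi r y -> in_Y C dxi r y'.
Proof.
move=> y'_nat eq_y [_ [f [g [f_ge0 g_ge0 flow cap]]]]; split=> //.
exists f, g; split=> // i lt_i u walk_u.
by rewrite -eq_y; [exact: flow | exact: nth_walk_Some walk_u].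
Qed.

Theorem proposition1
  (R : archiRealFieldType) (V : finType) (N : nat)
  (C : R) (p : 'I_N -> R) (d : 'I_N -> V -> R) (kind : option nat)
  (Q : seq V -> R) (Qd : seq V -> V -> R) (w : V -> R) (b : V -> nat) :
  0 < C ->
  (forall xi, 0 <= p xi) -> \sum_(xi < N) p xi = 1 ->
  (forall xi v, 0 <= d xi v <= C) ->
  (forall k, kind = Some k -> (0 < k)%N) ->
  (* Q is a recourse function with disaggregation Qd *)
  (forall r, is_route r -> 0 <= Q r) ->
  (forall r, is_route r -> Q r = \sum_(v <- r) Qd r v) ->
  (forall r v, is_route r -> v \notin r -> Qd r v = 0) ->
  (* w >= 0, and the hypothesis on w, b *)
  (forall v, 0 <= w v) ->
  (forall r, is_route r ->
     exists ybar : 'I_N -> V -> R,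
       [/\ in_PiR C d r ybar, in_box b ybar
         & forall v, v \in r -> \sum_(xi < N) p xi * w v * ybar xi v <= Qd r v]) ->
  (* conclusion: F(X,Q) is contained in the projection of M *)
  forall (x : edge V -> R) (rs : seq (seq V)) (theta : V -> R),
    in_X C p d kind x -> (forall e, x e \is a Num.int) -> encodes x rs ->
    (forall v, 0 <= theta v) ->
    (forall v, \sum_(r <- rs) Qd r v <= theta v) ->
    exists y : 'I_N -> V -> R,
      [/\ in_Pi C d rs y, in_box b y
        & forall v, \sum_(xi < N) p xi * w v * y xi v <= theta v].
Proof.
move=> _ _ _ _ _ _ _ Qd0 _ ybar_ex x rs theta _ _ [rs_routes rs_part _] _.
move=> Qd_theta.
have [ybar ybarP] :=
  seq_choice (fun _ _ => 0) (fun r rs_r => ybar_ex r (rs_routes r rs_r)).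
pose y xi v := ybar (route_of rs v) xi v.
have yP v := ybarP _ (route_of_in rs_part v).
exists y; split.
- move=> r rs_r xi; have [ybar_Pi _ _] := ybarP r rs_r.
  apply: in_Y_eq_on (ybar_Pi xi) => [v | v r_v].
    by have [yv_Pi _ _] := yP v; have [/(_ v)] := yv_Pi xi.
  by rewrite /y (route_ofE rs_part rs_r r_v).
- by move=> xi v; have [_ yv_box _] := yP v; exact: yv_box.
- move=> v; apply: le_trans (Qd_theta v).
  rewrite (big_route_of rs_part v) => [|r rs_r]; last exact/Qd0/rs_routes.
  by have [_ _ yv_Q] := yP v; exact: yv_Q (mem_route_of rs_part v).
Qed.
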